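(* Let $M$ be an $\aleph_1$-saturated model of a theory $T$, $\phi(x,y)$ a formula, $b$ a tuple in $M$, $U=\phi(M,b)$ and $\sigma\in\mathrm{Aut}(M)$. Then: (1) $\xi_{\sigma,U}(M)$ is closed in $2^{\mathbb{Z}}$. (2) For every elementary extension $N\succeq M$ and every $\tau\in\mathrm{Aut}(N)$ extending $\sigma$, we have $\xi_{\tau,V}(N)=\xi_{\sigma,U}(M)$, where $V=\phi(N,b)$.
   Context: For a bijection $\sigma$ of a set $X$ and $B\subseteq X$, $\xi_{\sigma,B}(a)=\{n\in\mathbb{Z}:\sigma^n(a)\in B\}$, viewed as an element of $2^{\mathbb{Z}}$ (product topology), and $\xi_{\sigma,B}(X)$ is the image of $X$ under this map. *)

From HB Require Import structures.
From mathcomp Require Import all_boot all_order all_algebra.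
From mathcomp Require Import all_classical all_reals topology.
From Stdlib Require List.
Set Implicit Arguments. Unset Strict Implicit. Unset Printing Implicit Defensive.
Local Open Scope classical_set_scope.

Record language := Language {
  fsym : Type; fary : fsym -> nat;
  rsym : Type; rary : rsym -> nat }.

Section Syntax.
Variable L : language.

Inductive term : Type :=
  | tvar : nat -> term
  | tapp : forall f : fsym L, ('I_(fary f) -> term) -> term.

(* variables are named by nat; Fex i phi binds variable i *)
Inductive formula : Type :=
  | Feq : term -> term -> formula
  | Frel : forall r : rsym L, ('I_(rary r) -> term) -> formula
  | Fneg : formula -> formula
  | Fand : formula -> formula -> formula
  | Fex : nat -> formula -> formula.

Fixpoint tfree (i : nat) (t : term) : Prop :=
  match t with
  | tvar j => i = j
  | tapp f ts => exists k, tfree i (ts k)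
  end.

Fixpoint free (i : nat) (phi : formula) : Prop :=
  match phi with
  | Feq t1 t2 => tfree i t1 \/ tfree i t2
  | Frel r ts => exists k, tfree i (ts k)
  | Fneg psi => free i psi
  | Fand psi chi => free i psi \/ free i chi
  | Fex j psi => i <> j /\ free i psi
  end.
End Syntax.

Record structure (L : language) := Structure {
  carrier :> Type;
  funs : forall f : fsym L, ('I_(fary f) -> carrier) -> carrier;
  rels : forall r : rsym L, ('I_(rary r) -> carrier) -> Prop }.

Section Semantics.
Variables (L : language) (M : structure L).

Definition upd (s : nat -> M) (i : nat) (a : M) : nat -> M :=
  fun j => if j == i then a else s j.

Fixpoint eval (s : nat -> M) (t : term L) : M :=
  match t with
  | tvar j => s j
  | tapp f ts => funs (fun k => eval s (ts k))
  end.

Fixpoint sat (s : nat -> M) (phi : formula L) : Prop :=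
  match phi with
  | Feq t1 t2 => eval s t1 = eval s t2
  | Frel r ts => rels (fun k => eval s (ts k))
  | Fneg psi => ~ sat s psi
  | Fand psi chi => sat s psi /\ sat s chi
  | Fex i psi => exists a, sat (upd s i a) psi
  end.

Definition models (T : set (formula L)) : Prop :=
  forall phi, T phi -> forall s, sat s phi.

(* A formula over A is a
   pair (phi, s) in the type variable 0, whose other free variables are
   assigned by s to elements of A. *)
Definition aleph1_saturated : Prop :=
  forall (A : set M), countable A ->
  forall (p : set (formula L * (nat -> M))),
    (forall q, p q -> forall i, i <> 0%N -> free i q.1 -> A (q.2 i)) ->
    (forall l : seq (formula L * (nat -> M)),
        (forall q, List.In q l -> p q) ->
        exists a : M, forall q, List.In q l -> sat (upd q.2 0 a) q.1) ->
    exists a : M, forall q, p q -> sat (upd q.2 0 a) q.1.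

Definition automorphism (sigma : M -> M) : Prop :=
  bijective sigma /\
  (forall f (args : 'I_(fary f) -> M), sigma (funs args) = funs (sigma \o args)) /\
  (forall r (args : 'I_(rary r) -> M), rels args <-> rels (sigma \o args)).

(* the set phi(M, b) of n-tuples: the tuple variable x is (x_0,...,x_{n-1})
   = variables 0..n-1, the parameters are the values of the assignment b on the
   remaining (free) variables *)
Definition tuple_assign (n : nat) (b : nat -> M) (a : 'I_n -> M) : nat -> M :=
  fun j => match ltnP j n with
           | LtnNotGeq H => a (Ordinal H)
           | _ => b j
           end.

Definition defset (n : nat) (phi : formula L) (b : nat -> M) : set ('I_n -> M) :=
  [set a | sat (tuple_assign b a) phi].

End Semantics.

Definition elementary (L : language) (M N : structure L) (e : M -> N) : Prop :=
  forall (phi : formula L) (s : nat -> M), sat s phi <-> sat (e \o s) phi.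

Definition tuple_map (X : Type) (n : nat) (sigma : X -> X) : ('I_n -> X) -> ('I_n -> X) :=
  fun a => sigma \o a.

(* "sigma^k(a) \in B" for k : int, sigma a bijection; for negative k,
   sigma^{-(j+1)}(a) \in B iff the unique c with sigma^{j+1}(c) = a lies in B *)
Definition zpow_in (X : Type) (sigma : X -> X) (B : set X) (a : X) (k : int) : Prop :=
  match k with
  | Posz j => B (iter j sigma a)
  | Negz j => exists c, iter j.+1 sigma c = a /\ B c
  end.

Definition xi (X : Type) (sigma : X -> X) (B : set X) (a : X) : int -> bool :=
  fun k => `[< zpow_in sigma B a k >].

Definition xi_image (X : Type) (sigma : X -> X) (B : set X) : set {ptws int -> bool} :=
  [set xi sigma B a | a in [set: X]].

From Pilot Require Import Defs.
From HB Require Import structures.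
From mathcomp Require Import all_boot all_order all_algebra.
From mathcomp Require Import all_classical all_reals topology.
From mathcomp Require Import zify.
From Stdlib Require List.
Set Implicit Arguments. Unset Strict Implicit. Unset Printing Implicit Defensive.
Local Open Scope classical_set_scope.

(* Since sigma^k(a) lies in phi(M, b) iff a lies in phi(M, sigma^-k b), the fibre of xi
   over f : int -> bool is the set of realisations of the type
   { phi(x, sigma^-k b)^(f k) : k in Z }, whose parameters form a countable set.
   If f is in the closure of xi(M), every finite part of this type is realised, so
   aleph_1-saturation realises the whole type.  In an elementary extension N with
   tau extending sigma, xi_tau(e a) = xi_sigma(a), and a finite part of the type
   realised in N is realised in M by elementarity; saturation then gives the reverse
   inclusion.  Saturation for n-tuples reduces to single variables by realising one
   coordinate at a time, for the existential closures of finite conjunctions. *)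

Section Renaming.
Variable L : language.

Fixpoint trename (r : nat -> nat) (t : term L) : term L :=
  match t with
  | tvar j => tvar L (r j)
  | tapp f ts => tapp (fun k => trename r (ts k))
  end.

Fixpoint frename (r : nat -> nat) (p : formula L) : formula L :=
  match p with
  | Feq t1 t2 => Feq (trename r t1) (trename r t2)
  | Frel R ts => Frel (r := R) (fun k => trename r (ts k))
  | Fneg q => Fneg (frename r q)
  | Fand q1 q2 => Fand (frename r q1) (frename r q2)
  | Fex i q => Fex (r i) (frename r q)
  end.

Lemma trename_can (r r' : nat -> nat) : cancel r r' -> cancel (trename r) (trename r').
Proof.
by move=> rK; elim=> [j|f ts IH] /=; [rewrite rK | congr tapp; apply: funext].
Qed.

Lemma frename_can (r r' : nat -> nat) : cancel r r' -> cancel (frename r) (frename r').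
Proof.
move=> rK; have tK := trename_can rK.
elim=> [t1 t2|R ts|q IH|q1 IH1 q2 IH2|i q IH] /=; rewrite ?tK ?IH ?IH1 ?IH2 ?rK //.
by congr Frel; apply: funext => k; rewrite tK.
Qed.

Lemma eval_trename (M : structure L) (r : nat -> nat) (s : nat -> M) (t : term L) :
  Defs.eval s (trename r t) = Defs.eval (s \o r) t.
Proof. by elim: t => [j|f ts IH] //=; congr funs; apply: funext. Qed.

Lemma upd_comp (M : structure L) (r : nat -> nat) (s : nat -> M) i a :
  injective r -> upd s (r i) a \o r = upd (s \o r) i a.
Proof. by move=> ri; apply: funext => j; rewrite /upd /= (inj_eq ri). Qed.

Lemma sat_frename (M : structure L) (r : nat -> nat) (s : nat -> M) (p : formula L) :
  injective r -> sat s (frename r p) <-> sat (s \o r) p.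
Proof.
move=> ri; elim: p s => [t1 t2|R ts|q IH|q1 IH1 q2 IH2|i q IH] s /=.
- by rewrite !eval_trename.
- by under eq_fun do rewrite eval_trename.
- by rewrite IH.
- by rewrite IH1 IH2.
- by split=> -[a Ha]; exists a; move: Ha; rewrite IH upd_comp.
Qed.

End Renaming.

Section FiniteConjunctions.
Variables (L : language) (M : structure L).

Definition Ftrue : formula L := Feq (tvar L 0) (tvar L 0).

Definition Fconj (F : list (formula L)) : formula L := List.fold_right (@Fand L) Ftrue F.

Definition Fexs (l : seq nat) (p : formula L) : formula L := foldr (@Fex L) p l.

Definition agree (X : Type) (l : seq nat) (v s : nat -> X) : nat -> X :=
  fun j => if j \in l then v j else s j.

Lemma sat_Fconj (s : nat -> M) (F : list (formula L)) :
  sat s (Fconj F) <-> forall p, List.In p F -> sat s p.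
Proof.
elim: F => [|q F IH] /=; first by [].
rewrite IH; split=> [[sq sF] p [<-|pF]|sF]; auto.
Qed.

Lemma agree_cons_upd x l (v s : nat -> M) :
  agree (x :: l) v s = agree l v (upd s x (v x)).
Proof.
apply: funext => j; rewrite /agree /upd in_cons.
by case: (j \in l); case: eqP => [->|]; rewrite ?orbT.
Qed.

Lemma agree_upd x l (v s : nat -> M) a :
  agree l v (upd s x a) = agree (x :: l) (agree l v (fun=> a)) s.
Proof.
apply: funext => j; rewrite /agree /upd in_cons.
by case: eqP => [->|_]; case: (_ \in l).
Qed.

Lemma sat_Fexs (s : nat -> M) l (p : formula L) :
  sat s (Fexs l p) <-> exists v, sat (agree l v s) p.
Proof.
elim: l s => [|x l IH] s /=; first by split=> [sp|[]]; [exists s|].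
split=> [[a /IH [v sv]]|[v sv]]; first by exists (agree l v (fun=> a)); rewrite -agree_upd.
by exists (v x); apply/IH; exists v; rewrite -agree_cons_upd.
Qed.

End FiniteConjunctions.

Section Tuples.
Variables (L : language) (M : structure L) (n : nat).

Lemma tuple_assign_ord (s : nat -> M) (a : 'I_n -> M) (i : 'I_n) : tuple_assign s a i = a i.
Proof.
rewrite /tuple_assign; case: ltnP => [lt_in|]; first by congr a; apply: val_inj.
by rewrite leqNgt ltn_ord.
Qed.

Lemma tuple_assign_ge (s : nat -> M) (a : 'I_n -> M) j : n <= j -> tuple_assign s a j = s j.
Proof. by rewrite /tuple_assign; case: ltnP => // jn; rewrite leqNgt jn. Qed.

Lemma agree_iota (v s : nat -> M) :
  agree (iota 0 n) v s = tuple_assign s (fun i : 'I_n => v i).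
Proof. by apply: funext => j; rewrite /agree mem_iota /tuple_assign; case: ltnP. Qed.

Lemma tuple_assign_agree (s : nat -> M) (a : 'I_n -> M) :
  tuple_assign s a = agree (iota 0 n) (tuple_assign s a) s.
Proof. by rewrite agree_iota; congr tuple_assign; apply: funext => i; rewrite tuple_assign_ord. Qed.

Lemma sat_Fexs_iota (s : nat -> M) (p : formula L) :
  sat s (Fexs (iota 0 n) p) <-> exists a : 'I_n -> M, sat (tuple_assign s a) p.
Proof.
rewrite sat_Fexs; split=> [[v]|[a]]; first by rewrite agree_iota; exists (fun i => v i).
by rewrite tuple_assign_agree; exists (tuple_assign s a).
Qed.

End Tuples.

Lemma comp_tuple_assign L (M N : structure L) (h : M -> N) n (b : nat -> M) (a : 'I_n -> M) :
  h \o tuple_assign b a = tuple_assign (h \o b) (h \o a).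
Proof. by apply: funext => j; rewrite /tuple_assign /=; case: ltnP. Qed.

Lemma countable_range (X : Type) (s : nat -> X) : countable (range s).
Proof. exact: card_le_trans (card_image_le _ _) (countableP _). Qed.

Definition swap0 (x j : nat) : nat := if j == 0 then x else if j == x then 0 else j.

Lemma swap0K x : involutive (swap0 x).
Proof.
move=> j; rewrite /swap0; case: (eqVneq j 0) => [->|j0]; first by case: eqVneq; rewrite ?eqxx.
by case: (eqVneq j x) => [->|jx]; rewrite ?eqxx ?(negbTE j0) ?(negbTE jx).
Qed.

Lemma list_cover (T U : Type) (P : U -> Prop) (h : list U -> T) (G : list T) :
  (forall g, List.In g G -> exists2 F, (forall u, List.In u F -> P u) & h F = g) ->
  exists2 Fs, (forall u, List.In u Fs -> P u) &
    forall g, List.In g G -> exists2 F, List.incl F Fs & h F = g.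
Proof.
elim: G => [|g G IH] HG; first by exists nil.
have [F FP hF] := HG g (or_introl erefl).
have [Fs FsP cover] := IH (fun g' gG => HG g' (or_intror gG)).
exists (List.app F Fs).
  by move=> u /List.in_app_iff [/FP|/FsP].
move=> g' [<-|/cover [F' F'Fs <-]].
  by exists F => //; apply/List.incl_appl/List.incl_refl.
by exists F' => //; apply: List.incl_appr.
Qed.

Section Saturation.
Variables (L : language) (M : structure L).
Hypothesis Hsat : aleph1_saturated M.

Definition finitely_satisfiable (l : seq nat) (s : nat -> M) (P : set (formula L)) :=
  forall F : list (formula L), (forall p, List.In p F -> P p) ->
    exists v, sat (agree l v s) (Fconj F).

Lemma saturated_upd (x : nat) (s : nat -> M) (P : set (formula L)) :
  (forall F : list (formula L), (forall p, List.In p F -> P p) ->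
     exists a, sat (upd s x a) (Fconj F)) ->
  exists a, forall p, P p -> sat (upd s x a) p.
Proof.
have swK := swap0K x; have swI := inv_inj swK.
(* The realised variable of [aleph1_saturated] is [0]; [x] is moved there along [swap0 x]. *)
have swx : swap0 x x = 0 by rewrite /swap0 eqxx; case: eqP.
have sat_swap a p : sat (upd (s \o swap0 x) 0 a) (frename (swap0 x) p) <-> sat (upd s x a) p.
  rewrite sat_frename //; suff -> : upd (s \o swap0 x) 0 a \o swap0 x = upd s x a by [].
  by apply: funext => j; rewrite /upd /= -{1}swx (inj_eq swI) swK.
have frenameK := frename_can swK.
move=> finsat.
pose Q := [set (frename (swap0 x) p, s \o swap0 x) | p in P].
have [||a Qa] := Hsat (countable_range s) (p := Q).
- by move=> _ [p _ <-] i _ _; exists (swap0 x i).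
- move=> l lQ; pose F := List.map (fun q => frename (swap0 x) q.1) l.
  have [|a /sat_Fconj Fa] := finsat F.
    by move=> _ /List.in_map_iff [_ [<- /lQ [p Pp <-]]]; rewrite /= frenameK.
  exists a => q ql; have [p Pp qe] := lQ q ql.
  rewrite -qe /= sat_swap; apply: Fa; apply/List.in_map_iff.
  by exists q; rewrite -qe /= frenameK qe.
- by exists a => p Pp; apply/sat_swap; apply: (Qa (_, _)); exists p.
Qed.

Lemma saturated_agree (l : seq nat) (s : nat -> M) (P : set (formula L)) :
  finitely_satisfiable l s P -> exists v, forall p, P p -> sat (agree l v s) p.
Proof.
elim: l s => [|x l IH] s finsat.
  exists s => p Pp; have [|v [sp _]] := finsat [:: p]; last exact: sp.
  by move=> q [<-|[]].
pose Px := [set Fexs l (Fconj F) | F in [set F | forall p, List.In p F -> P p]].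
have [a Pxa] : exists a, forall q, Px q -> sat (upd s x a) q.
  apply: saturated_upd => G GPx.
  have [Fs FsP cover] := list_cover (h := fun F => Fexs l (Fconj F)) GPx.
  have [v /sat_Fconj Fsv] := finsat Fs FsP.
  exists (v x); apply/sat_Fconj => _ /cover [F FFs <-].
  by apply/sat_Fexs; exists v; rewrite -agree_cons_upd; apply/sat_Fconj => p /FFs /Fsv.
have [|v Pv] := IH (upd s x a).
  by move=> F FP; apply/sat_Fexs/Pxa; exists F.
by exists (agree l v (fun=> a)) => p /Pv; rewrite agree_upd.
Qed.

Lemma saturated_tuple (n : nat) (s : nat -> M) (P : set (formula L)) :
  (forall F : list (formula L), (forall p, List.In p F -> P p) ->
     exists a : 'I_n -> M, sat (tuple_assign s a) (Fconj F)) ->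
  exists a : 'I_n -> M, forall p, P p -> sat (tuple_assign s a) p.
Proof.
move=> finsat; have [|v Pv] := @saturated_agree (iota 0 n) s P.
  by move=> F /finsat [a]; rewrite tuple_assign_agree; exists (tuple_assign s a).
by exists (fun i => v i) => p /Pv; rewrite agree_iota.
Qed.

End Saturation.

Section Automorphisms.
Variables (L : language) (M : structure L).

Lemma eval_comp_auto (g : M -> M) (s : nat -> M) (t : term L) :
  automorphism g -> Defs.eval (g \o s) t = g (Defs.eval s t).
Proof.
move=> [_ [g_funs _]]; elim: t => [j|f ts IH] //=.
by rewrite g_funs; congr funs; apply: funext.
Qed.

Lemma sat_comp_auto (g : M -> M) (s : nat -> M) (p : formula L) :
  automorphism g -> sat (g \o s) p <-> sat s p.
Proof.
move=> Hg; have [g' gK g'K] := Hg.1.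
elim: p s => [t1 t2|R ts|q IH|q1 IH1 q2 IH2|i q IH] s /=.
- by rewrite !eval_comp_auto //; split=> [/(can_inj gK)|->].
- under eq_fun do rewrite eval_comp_auto //.
  by rewrite -(Hg.2.2 _ (fun k => Defs.eval s (ts k))).
- by rewrite IH.
- by rewrite IH1 IH2.
- have upd_comp_auto a : upd (g \o s) i (g a) = g \o upd s i a.
    by apply: funext => j; rewrite /upd /=; case: ifP.
  split=> -[a]; last by exists (g a); rewrite upd_comp_auto IH.
  by exists (g' a); rewrite -IH -upd_comp_auto g'K.
Qed.

Lemma automorphism_inv (g g' : M -> M) :
  automorphism g -> cancel g g' -> cancel g' g -> automorphism g'.
Proof.
move=> Hg gK g'K; split; first by exists g.
split=> [f args|R args].
  by apply: (can_inj gK); rewrite Hg.2.1 g'K; congr funs; apply: funext => k /=; rewrite g'K.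
rewrite (Hg.2.2 _ (g' \o args)).
by have -> : g \o (g' \o args) = args by apply: funext => k /=; rewrite g'K.
Qed.

Lemma sat_comp_iter (g : M -> M) j (s : nat -> M) (p : formula L) :
  automorphism g -> sat (iter j g \o s) p <-> sat s p.
Proof.
move=> Hg; elim: j => [|j IH]; first exact: iff_refl.
exact: iff_trans (sat_comp_auto (iter j g \o s) p Hg) IH.
Qed.

End Automorphisms.

(** [powz g h k] is [g ^ k] when [h] is the inverse of [g]. *)
Definition powz (X : Type) (g h : X -> X) (k : int) : X -> X :=
  match k with Posz j => iter j g | Negz j => iter j.+1 h end.

Lemma iter_tuple_map (X : Type) n (g : X -> X) j (a : 'I_n -> X) :
  iter j (tuple_map g) a = iter j g \o a.
Proof. by elim: j => //= j ->. Qed.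

Lemma iterK (X : Type) (g g' : X -> X) j : cancel g g' -> cancel (iter j g) (iter j g').
Proof. by move=> gK; elim: j => // j IH x; rewrite iterSr iterS gK IH. Qed.

Lemma asbool_eq (P : Prop) (v : bool) : `[< P >] = v <-> (if v then P else ~ P).
Proof.
case: v; first by split=> /asboolP.
by split=> [PF /asboolT|/asboolF //]; rewrite PF.
Qed.

Lemma list_in_range (I T : Type) (f : I -> T) (F : list T) :
  (forall y, List.In y F -> range f y) -> exists K, F = List.map f K.
Proof.
elim: F => [|y F IH] FR; first by exists nil.
have [i _ <-] := FR y (or_introl erefl).
by have [K ->] := IH (fun y' yF => FR y' (or_intror yF)); exists (i :: K).
Qed.

Lemma nbhs_agree (I : eqType) (f : {ptws I -> bool}) (K : list I) :
  nbhs f [set g : {ptws I -> bool} | forall k, List.In k K -> g k = f k].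
Proof.
elim: K => [|k K IH]; first by apply: filterS filterT => g _ k [].
have nbhs_k : nbhs f [set g : {ptws I -> bool} | g k = f k].
  by apply: (@proj_continuous I (fun _ => bool) k f [set f k]); apply/principal_filterP.
by apply: filterS (filterI nbhs_k IH) => g [gk gK] k' [<-|/gK].
Qed.

(* The conditions of an itinerary type have different parameter assignments
   [sigma^-k b]; renaming the parameters of condition [k] apart puts all of them
   over the single assignment [merge_params]. *)
Definition rename_param (n : nat) (k : int) (j : nat) : nat :=
  if j < n then j else n + pickle (k, j).

Definition merge_params (X : Type) (n : nat) (c : int -> nat -> X) : nat -> X :=
  fun m => if unpickle (m - n) is Some kj then c kj.1 kj.2 else c 0 m.

Lemma rename_param_inj n k : injective (rename_param n k).
Proof.
move=> j1 j2; rewrite /rename_param.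
case: ltnP => h1; case: ltnP => h2 // e; try lia.
by move: e => /eqP; rewrite eqn_add2l => /eqP/(pcan_inj pickleK) [].
Qed.

Lemma tuple_assign_merge_params L (M : structure L) n (c : int -> nat -> M) (a : 'I_n -> M) k :
  tuple_assign (merge_params n c) a \o rename_param n k = tuple_assign (c k) a.
Proof.
apply: funext => j; rewrite /= /rename_param; case: (ltnP j n) => [jn|nj].
  by rewrite /tuple_assign; case: ltnP => //; rewrite leqNgt jn.
by rewrite tuple_assign_ge ?leq_addr // (tuple_assign_ge _ _ nj) /merge_params addKn pickleK.
Qed.

Definition orbit_params (X : Type) n (g g' : X -> X) (b : nat -> X) : nat -> X :=
  merge_params n (fun k j => powz g' g k (b j)).

Definition itinerary_formula L n (phi : formula L) (f : int -> bool) (k : int) : formula L :=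
  frename (rename_param n k) (if f k then phi else Fneg phi).

Section Itinerary.
Variables (L : language) (M : structure L) (n : nat) (sigma sigma' : M -> M).
Hypotheses (Hsigma : automorphism sigma)
  (sigmaK : cancel sigma sigma') (sigma'K : cancel sigma' sigma).

Lemma zpow_in_defset (phi : formula L) (b : nat -> M) (a : 'I_n -> M) k :
  zpow_in (tuple_map sigma) (defset phi b) a k <->
  sat (tuple_assign (powz sigma' sigma k \o b) a) phi.
Proof.
have Hsigma' := automorphism_inv Hsigma sigmaK sigma'K.
case: k => j /=.
  rewrite /defset /= iter_tuple_map -(sat_comp_iter j _ _ Hsigma') comp_tuple_assign.
  by have -> : iter j sigma' \o (iter j sigma \o a) = a by apply: funext => i /=; rewrite iterK.
split=> [[c [<- c_sat]]|a_sat].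
  by rewrite iter_tuple_map -comp_tuple_assign sat_comp_iter.
exists (iter j.+1 sigma' \o a); split.
  by rewrite iter_tuple_map; apply: funext => i; exact: (iterK j.+1 sigma'K).
rewrite /defset /= -(sat_comp_iter j.+1 _ _ Hsigma) comp_tuple_assign.
by have -> : iter j.+1 sigma \o (iter j.+1 sigma' \o a) = a
  by apply: funext => i; exact: (iterK j.+1 sigma'K).
Qed.

Variables (phi : formula L) (b : nat -> M).

Local Notation xiM := (xi (tuple_map (n := n) sigma) (defset (n := n) phi b)).
Local Notation paramsM := (orbit_params n sigma sigma' b).

Lemma sat_itinerary_formula (a : 'I_n -> M) (f : int -> bool) k :
  sat (tuple_assign paramsM a) (itinerary_formula n phi f k) <-> xiM a k = f k.
Proof.
rewrite sat_frename; last exact: rename_param_inj.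
rewrite tuple_assign_merge_params /xi asbool_eq.
by case: (f k); rewrite /= -zpow_in_defset.
Qed.

Lemma sat_itinerary_conj (a : 'I_n -> M) (f : int -> bool) (K : list int) :
  sat (tuple_assign paramsM a) (Fconj (List.map (itinerary_formula n phi f) K)) <->
  forall k, List.In k K -> xiM a k = f k.
Proof.
rewrite sat_Fconj; split=> [aK k kK|aK _ /List.in_map_iff [k [<- kK]]].
  by apply/sat_itinerary_formula/aK/List.in_map_iff; exists k.
exact/sat_itinerary_formula/aK.
Qed.

Lemma xi_image_of_finite_agreement (f : int -> bool) : aleph1_saturated M ->
  (forall K : list int, exists a, forall k, List.In k K -> xiM a k = f k) ->
  xi_image (tuple_map (n := n) sigma) (defset (n := n) phi b) f.
Proof.
move=> Hsat agreeK.
have [|a Pa] := @saturated_tuple L M Hsat n paramsM (range (itinerary_formula n phi f)).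
  move=> F /list_in_range [K ->]; have [a aK] := agreeK K.
  by exists a; apply/sat_itinerary_conj.
by exists a => //; apply: funext => k; apply/sat_itinerary_formula/Pa; exists k.
Qed.

End Itinerary.

Section ElementaryExtension.
Variables (L : language) (M N : structure L) (e : M -> N) (n : nat).
Variables (phi : formula L) (b : nat -> M) (sigma sigma' : M -> M) (tau tau' : N -> N).
Hypotheses (He : elementary e) (Hsigma : automorphism sigma) (Htau : automorphism tau).
Hypotheses (sigmaK : cancel sigma sigma') (sigma'K : cancel sigma' sigma).
Hypotheses (tauK : cancel tau tau') (tau'K : cancel tau' tau).
Hypothesis tau_e : forall x, tau (e x) = e (sigma x).

Local Notation xiM := (xi (tuple_map (n := n) sigma) (defset (n := n) phi b)).
Local Notation xiN := (xi (tuple_map (n := n) tau) (defset (n := n) phi (e \o b))).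

Lemma powz_comp k x : powz tau' tau k (e x) = e (powz sigma' sigma k x).
Proof.
have tau'_e y : tau' (e y) = e (sigma' y) by rewrite -{1}(sigma'K y) -tau_e tauK.
by case: k => j; elim: j x => //= j IH x; rewrite IH ?tau_e ?tau'_e.
Qed.

Lemma orbit_params_comp : orbit_params n tau tau' (e \o b) = e \o orbit_params n sigma sigma' b.
Proof.
apply: funext => m; rewrite /orbit_params /merge_params /=.
by case: (unpickle _) => [kj|] /=; rewrite ?powz_comp.
Qed.

Lemma xi_elementary (a : 'I_n -> M) : xiN (e \o a) = xiM a.
Proof.
apply: funext => k; apply/(sat_itinerary_formula Htau tauK tau'K phi (e \o b) (e \o a) (xiM a)).
rewrite orbit_params_comp -comp_tuple_assign -He.
exact/(sat_itinerary_formula Hsigma sigmaK sigma'K).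
Qed.

Lemma xi_image_elementary : aleph1_saturated M ->
  xi_image (tuple_map (n := n) tau) (defset (n := n) phi (e \o b))
  = xi_image (tuple_map (n := n) sigma) (defset (n := n) phi b).
Proof.
move=> Hsat; apply/seteqP; split=> _ [a _ <-]; last by exists (e \o a) => //; apply: xi_elementary.
apply: (xi_image_of_finite_agreement Hsigma sigmaK sigma'K Hsat) => K.
have : exists a' : 'I_n -> N, sat (tuple_assign (orbit_params n tau tau' (e \o b)) a')
    (Fconj (List.map (itinerary_formula n phi (xiN a)) K)).
  by exists a; apply/(sat_itinerary_conj Htau tauK tau'K).
rewrite -sat_Fexs_iota orbit_params_comp -He sat_Fexs_iota => -[a' a'K].
by exists a'; apply/(sat_itinerary_conj Hsigma sigmaK sigma'K).
Qed.

End ElementaryExtension.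

Unset Implicit Arguments.

Theorem corollary4p4 (L : language) (T : set (formula L)) (M : structure L)
  (HT : models M T) (Hsat : aleph1_saturated M)
  (n : nat) (phi : formula L) (b : nat -> M)
  (sigma : M -> M) (Hsigma : automorphism sigma) :
  closed (xi_image (tuple_map (n := n) sigma) (defset (n := n) phi b))
  /\
  (forall (N : structure L) (e : M -> N), elementary e ->
     forall tau : N -> N, automorphism tau ->
       (forall x : M, tau (e x) = e (sigma x)) ->
       xi_image (tuple_map (n := n) tau) (defset (n := n) phi (e \o b))
       = xi_image (tuple_map (n := n) sigma) (defset (n := n) phi b)).
Proof.
have [sigma' sigmaK sigma'K] := Hsigma.1.
split=> [f f_cl|N e He tau Htau tau_e].
  apply: (xi_image_of_finite_agreement Hsigma sigmaK sigma'K Hsat) => K.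
  have [_ [[a _ <-] aK]] := f_cl _ (nbhs_agree f K).
  by exists a => k /aK.
have [tau' tauK tau'K] := Htau.1.
exact: xi_image_elementary.
Qed.
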